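(* Let $Q=M_{12}$, $S=Q^4$, and let $A_1,A_2,A_3,A_4\leq Q$ with each $A_i\cong M_{11}$. Let $\psi:A_2\to A_3$ be an isomorphism and define the subgroups $X=\{(p,p,q,q)\mid p,q\in Q\}$ and $Y=\{(a_1,a_2,a_2\psi,a_4)\mid a_1\in A_1,a_2\in A_2,a_4\in A_4\}$ of $S$. Then $S\neq XY$. *)

From HB Require Import structures.
From mathcomp Require Import all_boot all_order all_fingroup all_solvable.
Set Implicit Arguments. Unset Strict Implicit. Unset Printing Implicit Defensive.

(* Permutations of 'I_12 given by their list of images (points 0..11,
   i.e. GAP's points 1..12 shifted by -1). *)
Definition perm_fun (s : seq nat) (i : 'I_12) : 'I_12 := inord (nth 0%N s i).

Definition l_a := [:: 1; 2; 3; 4; 5; 6; 7; 8; 9; 10; 0; 11]%N.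
Definition l_b := [:: 0; 1; 6; 9; 5; 3; 10; 2; 8; 4; 7; 11]%N.
Definition l_c := [:: 11; 10; 5; 7; 8; 2; 9; 3; 4; 6; 1; 0]%N.

Lemma perm_fun_inj s : size s = 12 -> all (fun k => k < 12) s -> uniq s ->
  injective (perm_fun s).
Proof.
move=> Hs Ha Hu i j; rewrite /perm_fun => /(congr1 val).
have Hn (k : 'I_12) : nth 0 s k < 12.
  by apply: (allP Ha); apply: mem_nth; rewrite Hs.
rewrite /= !inordK ?Hn // => /eqP; rewrite nth_uniq ?Hs // => /eqP; exact: val_inj.
Qed.

Lemma inj_a : injective (perm_fun l_a). Proof. exact: perm_fun_inj. Qed.
Lemma inj_b : injective (perm_fun l_b). Proof. exact: perm_fun_inj. Qed.
Lemma inj_c : injective (perm_fun l_c). Proof. exact: perm_fun_inj. Qed.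

(* GAP generators: a = (1,...,11), b = (3,7,11,8)(4,10,5,6),
   c = (1,12)(2,11)(3,6)(4,8)(5,9)(7,10). *)
Definition gen_a : 'S_12 := perm inj_a.
Definition gen_b : 'S_12 := perm inj_b.
Definition gen_c : 'S_12 := perm inj_c.

(* MathieuGroup(12) and MathieuGroup(11) as in GAP. *)
Local Open Scope group_scope.
Definition M12 : {group 'S_12} := <<[set gen_a; gen_b; gen_c]>>%G.
Definition M11 : {group 'S_12} := <<[set gen_a; gen_b]>>%G.

From Stdlib Require Import MSetPositive NArith Lia.
From mathcomp Require Import all_boot all_order all_fingroup all_solvable zify.
Set Implicit Arguments. Unset Strict Implicit. Unset Printing Implicit Defensive.
Local Open Scope group_scope.

(* Suppose S = XY.  Decomposing (1,g,1,1) and (1,1,1,g) as products x y shows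
   M12 = A1 A2 and M12 = (D psi) A4, where D = A1 :&: A2 (section
   Factorisation); hence also M12 = A3 A4.  As |M12| = 12 |M11|, counting
   gives |D| = |A3 :&: A4| = 660 and |D psi :&: A4| = 55.  Since D psi <= A3,
   the groups D psi and A3 :&: A4 are two subgroups of order 660 of A3 ~ M11
   meeting in a subgroup of order 55.  This is impossible in M11
   (M11_no_660_pair): after conjugating by a Sylow argument both contain the
   11-cycle a, and every subgroup of order 660 of M11 containing a contains a
   fixed involution t (index12_contains_t), which cannot lie in a group of
   order 55. *)

(* Permutations of 'I_12 are encoded by the list of their images; [lcomp s t]
   encodes "first s, then t", matching MathComp's left-to-right product. *)
Definition lcomp (s t : seq nat) : seq nat := map (fun i => nth 0 t i) s.
Definition perm_list (s : seq nat) : bool :=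
  [&& size s == 12, all (fun k => k < 12) s & uniq s].
Definition lperm (s : seq nat) : 'S_12 := insubd (1 : 'S_12) [ffun i => perm_fun s i].

Lemma perm_list_inj s : perm_list s -> injective (perm_fun s).
Proof. by case/and3P=> /eqP size_s all_s uniq_s; apply: perm_fun_inj. Qed.

Lemma perm_list_nth s i : perm_list s -> i < 12 -> nth 0 s i < 12.
Proof.
by case/and3P=> /eqP size_s /allP all_s _ lt_i; apply: all_s; rewrite mem_nth ?size_s.
Qed.

Lemma lpermE s : perm_list s -> forall i, lperm s i = perm_fun s i.
Proof.
move=> ps i; have injf : injectiveb [ffun i => perm_fun s i].
  by apply/injectiveP => x y; rewrite !ffunE; apply: perm_list_inj.
by rewrite -pvalE /lperm insubdK // ffunE.
Qed.

Lemma lperm_val s (i : 'I_12) : perm_list s -> val (lperm s i) = nth 0 s i.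
Proof. by move=> ps; rewrite lpermE //; apply: inordK; rewrite perm_list_nth. Qed.

Lemma lcomp_perm_list s t : perm_list s -> perm_list t -> perm_list (lcomp s t).
Proof.
move=> ps pt; have /and3P[/eqP size_s /allP all_s uniq_s] := ps.
have /and3P[/eqP size_t _ uniq_t] := pt.
apply/and3P; split; first by rewrite size_map size_s.
  by apply/allP => _ /mapP[i /all_s lt_i ->]; apply: perm_list_nth.
rewrite map_inj_in_uniq // => i j /all_s lt_i /all_s lt_j /eqP.
by rewrite nth_uniq ?size_t // => /eqP.
Qed.

Lemma lperm_comp s t : perm_list s -> perm_list t -> lperm (lcomp s t) = lperm s * lperm t.
Proof.
move=> ps pt; apply/permP => i; apply: val_inj.
have /and3P[/eqP size_s _ _] := ps.
by rewrite permM !lperm_val ?lcomp_perm_list // (nth_map 0) ?size_s.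
Qed.

Lemma lperm_inj s t : perm_list s -> perm_list t -> lperm s = lperm t -> s = t.
Proof.
move=> ps pt e; have /and3P[/eqP size_s _ _] := ps; have /and3P[/eqP size_t _ _] := pt.
apply: (@eq_from_nth _ 0) => [|i]; first by rewrite size_s size_t.
rewrite size_s => lt_i.
by rewrite -(lperm_val (Ordinal lt_i) ps) -(lperm_val (Ordinal lt_i) pt) e.
Qed.

Lemma lperm_eq s t : perm_list s -> perm_list t -> (lperm s == lperm t) = (s == t).
Proof. by move=> ps pt; apply/eqP/eqP => [|-> //]; apply: lperm_inj. Qed.

Definition lid : seq nat := iota 0 12.
Lemma perm_list_lid : perm_list lid. Proof. by []. Qed.
Lemma lperm_lid : lperm lid = 1.
Proof. by apply/permP => i; apply: val_inj; rewrite lperm_val // perm1 nth_iota. Qed.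

Fixpoint lpow (s : seq nat) (n : nat) : seq nat :=
  if n is k.+1 then lcomp (lpow s k) s else lid.

Lemma lperm_pow s n : perm_list s -> perm_list (lpow s n) /\ lperm (lpow s n) = lperm s ^+ n.
Proof.
move=> ps; elim: n => [|n [pn en]] /=; first by rewrite lperm_lid expg0.
by split; [apply: lcomp_perm_list | rewrite lperm_comp // en expgSr].
Qed.

(* An injective numbering of lists of points, used as keys of finite sets of
   permutations represented by binary tries ([PositiveSet]). *)
Definition keyN (s : seq nat) : N :=
  foldr (fun a c => N.add (N.of_nat a) (N.mul 12%num c)) 0%num s.
Definition key (s : seq nat) : positive := N.succ_pos (keyN s).

Lemma key_inj s t : size s = size t -> all (fun k => k < 12) s ->
  all (fun k => k < 12) t -> key s = key t -> s = t.
Proof.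
move=> + + + /(f_equal Npos); rewrite /key !N.succ_pos_spec => + + + /N.succ_inj.
elim: s t => [|a s IH] [|b t] // [size_st] /andP[lt_a all_s] /andP[lt_b all_t] e.
have e' : (N.of_nat a + 12 * keyN s = N.of_nat b + 12 * keyN t)%num := e.
move/ltP: lt_a => lt_a; move/ltP: lt_b => lt_b.
have eab : a = b by lia.
by rewrite eab (IH t) //; subst; lia.
Qed.

Lemma keyset_add (L : seq (seq nat)) S k :
  PositiveSet.In k (foldl (fun S x => PositiveSet.add (key x) S) S L) <->
  PositiveSet.In k S \/ exists2 x, x \in L & key x = k.
Proof.
elim: L S => [|x L IH] S /=; first by split; [left | case=> // [][]].
rewrite IH PositiveSet.add_spec; split.
- case=> [[->|inS]|[y inL <-]]; [right; exists x | left | right; exists y] => //.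
    by rewrite inE eqxx.
  by rewrite inE inL orbT.
- case=> [inS|[y]]; first by left; right.
  by rewrite inE => /orP[/eqP-> <-|inL <-]; [left; left | right; exists y].
Qed.

Definition keyset (L : seq (seq nat)) : PositiveSet.t :=
  foldl (fun S x => PositiveSet.add (key x) S) PositiveSet.empty L.

Lemma keysetP L k : PositiveSet.In k (keyset L) <-> exists2 x, x \in L & key x = k.
Proof.
rewrite /keyset keyset_add; split; last by right.
by case=> // /PositiveSet.empty_spec.
Qed.

Fixpoint uniq_keys (L : seq (seq nat)) (S : PositiveSet.t) : bool :=
  if L is x :: l then
    if PositiveSet.mem (key x) S then false else uniq_keys l (PositiveSet.add (key x) S)
  else true.

Lemma uniq_keysP L S : uniq_keys L S -> uniq L.
Proof.
suff keys_fresh : uniq_keys L S -> uniq L /\ forall x, x \in L -> ~ PositiveSet.In (key x) S.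
  by move=> /keys_fresh[].
elim: L S => [|x L IH] S //=.
case mem_x: (PositiveSet.mem (key x) S) => // /IH [uniq_L notin_L]; split.
  rewrite uniq_L andbT; apply/negP => /notin_L; apply.
  by apply/PositiveSet.add_spec; left.
move=> y; rewrite inE => /orP[/eqP->|/notin_L yL] inS.
  by move: inS; rewrite -PositiveSet.mem_spec mem_x.
by apply: yL; apply/PositiveSet.add_spec; right.
Qed.

Definition stepf (x : seq nat) (acc : seq (seq nat) * PositiveSet.t) (g : seq nat) :=
  let y := lcomp x g in
  if PositiveSet.mem (key y) acc.2 then acc else (y :: acc.1, PositiveSet.add (key y) acc.2).
Definition step (gens : seq (seq nat)) acc (x : seq nat) := foldl (stepf x) acc gens.
Definition expand (gens fr : seq (seq nat)) (seen : PositiveSet.t) :=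
  foldl (step gens) ([::], seen) fr.

Fixpoint bfs gens (fuel : nat) fr seen (acc : seq (seq nat)) : seq (seq nat) :=
  if fuel is f.+1 then
    let p := expand gens fr seen in
    if p.1 is [::] then acc else bfs gens f p.1 p.2 (catrev p.1 acc)
  else acc.

Fixpoint search gens (ok : pred (seq nat)) (fuel : nat) fr seen : bool :=
  if has ok fr then true else
  if fuel is f.+1 then let p := expand gens fr seen in search gens ok f p.1 p.2
  else false.

Section Exploration.

Variables (P : seq nat -> Prop) (gens : seq (seq nat)).
Hypothesis P_step : forall x g, P x -> g \in gens -> P (lcomp x g).

Lemma expand_sound fr seen :
  (forall y, y \in fr -> P y) -> forall y, y \in (expand gens fr seen).1 -> P y.
Proof.
rewrite /expand; move=> P_fr.
have : forall y, y \in ([::], seen).1 -> P y by [].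
elim: fr ([::], seen) P_fr => [|x fr IH] acc //= P_fr P_acc.
apply: IH => [y fr_y|]; first by apply: P_fr; rewrite inE fr_y orbT.
have P_x : P x by apply: P_fr; rewrite inE eqxx.
rewrite /step; have : {subset gens <= gens} by [].
elim: {1 3}gens acc P_acc => [|g gs IHg] acc P_acc //= sub_gs.
apply: IHg => [|y gs_y]; last by apply: sub_gs; rewrite inE gs_y orbT.
rewrite /stepf; case: ifP => // _ y; rewrite inE => /orP[/eqP->|]; last exact: P_acc.
by apply: P_step => //; apply: sub_gs; rewrite inE eqxx.
Qed.

Lemma bfs_sound fuel fr seen acc :
  (forall y, y \in fr -> P y) -> (forall y, y \in acc -> P y) ->
  forall y, y \in bfs gens fuel fr seen acc -> P y.
Proof.
elim: fuel fr seen acc => [|f IH] fr seen acc //= P_fr P_acc.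
have := @expand_sound fr seen P_fr.
case: (expand gens fr seen) => new s2 /= P_new.
case: new P_new => [|z zs] P_new //.
apply: IH => // y; rewrite catrevE mem_cat mem_rev => /orP[/P_new|/P_acc] //.
Qed.

Lemma search_sound ok fuel fr seen :
  (forall y, y \in fr -> P y) -> search gens ok fuel fr seen -> exists y, P y /\ ok y.
Proof.
elim: fuel fr seen => [|f IH] fr seen /= P_fr; case: hasP => [[y fr_y ok_y] _|_] //;
  try by exists y; split => //; apply: P_fr.
by apply: IH; apply: expand_sound.
Qed.

End Exploration.

Definition lperms (L : seq (seq nat)) : {set 'S_12} := [set p | p \in map lperm L].

Definition closed_list (gens L : seq (seq nat)) : bool :=
  let S := keyset L in
  all (fun x => all (fun g => PositiveSet.mem (key (lcomp x g)) S) gens) L.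

Lemma closed_listP gens L x g : all perm_list gens -> all perm_list L ->
  closed_list gens L -> x \in L -> g \in gens -> lcomp x g \in L.
Proof.
move=> /allP p_gens /allP p_L /allP cl xL g_gens.
have /allP/(_ g g_gens)/PositiveSet.mem_spec/keysetP[y yL ey] := cl x xL.
have /and3P[/eqP size_y all_y _] := p_L y yL.
have /and3P[/eqP size_c all_c _] := lcomp_perm_list (p_L x xL) (p_gens g g_gens).
by rewrite -(key_inj _ all_y all_c ey) // size_y size_c.
Qed.

Lemma card_lperms L : all perm_list L -> uniq L -> #|lperms L| = size L.
Proof.
move=> /allP p_L uniq_L; rewrite cardsE -(size_map lperm); apply/card_uniqP.
by rewrite map_inj_in_uniq // => x y xL yL; apply: lperm_inj; apply: p_L.
Qed.

Lemma card_lperms_le L : #|lperms L| <= size L.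
Proof. by rewrite cardsE -(size_map lperm) card_size. Qed.

Definition enum_closure (gens : seq (seq nat)) : seq (seq nat) :=
  let seen := PositiveSet.add (key lid) PositiveSet.empty in
  bfs gens 30 [:: lid] seen [:: lid].

Definition enum_ok (gens L : seq (seq nat)) : bool :=
  [&& all perm_list L, closed_list gens L, uniq_keys L PositiveSet.empty & lid \in L].

Section GeneratedGroup.

Variables (A : {set 'S_12}) (gens : seq (seq nat)).
Hypotheses (p_gens : all perm_list gens) (A_gens : A =i map lperm gens).

Lemma enum_closure_sub : forall y, y \in enum_closure gens -> perm_list y /\ lperm y \in <<A>>.
Proof.
have /allP p_gens' := p_gens.
apply: (@bfs_sound (fun y => perm_list y /\ lperm y \in <<A>>)) => [x g [px Ax] g_gens||];
  last 2 first.
- by move=> y; rewrite inE => /eqP->; rewrite lperm_lid group1.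
- by move=> y; rewrite inE => /eqP->; rewrite lperm_lid group1.
split; first by apply: lcomp_perm_list => //; apply: p_gens'.
by rewrite lperm_comp ?(p_gens' g) // groupM // mem_gen // A_gens map_f.
Qed.

(* A certified closed list containing the identity contains <<A>>: the set of
   right multipliers preserving it is a group containing [A]. *)
Lemma gen_sub_lperms L : enum_ok gens L -> <<A>> \subset lperms L.
Proof.
case/and4P=> p_L cl _ lid_L.
pose G := [set h | [forall x in lperms L, x * h \in lperms L]].
have gG : group_set G.
  apply/andP; split; first by rewrite inE; apply/forall_inP => x; rewrite mulg1.
  apply/subsetP => _ /mulsgP[h1 h2 /[!inE] /forall_inP G1 /forall_inP G2 ->].
  by apply/forall_inP => x /G1/G2; rewrite mulgA.
have A_G : <<A>> \subset Group gG.
  rewrite gen_subG; apply/subsetP => _ /[!A_gens] /mapP[g g_gens ->].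
  rewrite inE; apply/forall_inP => _ /[!inE] /mapP[y yL ->].
  rewrite -lperm_comp ?(allP p_L y yL) ?(allP p_gens g g_gens) //.
  by rewrite map_f // (closed_listP p_gens p_L cl yL g_gens).
apply/subsetP => h /(subsetP A_G); rewrite inE => /forall_inP/(_ 1).
by rewrite mul1g; apply; rewrite inE -lperm_lid map_f.
Qed.

Lemma enum_closureE : enum_ok gens (enum_closure gens) ->
  <<A>> = lperms (enum_closure gens) /\ #|<<A>>| = size (enum_closure gens).
Proof.
have := enum_closure_sub; move: (enum_closure gens) => L L_sub ok.
have /and4P[p_L _ /uniq_keysP uniq_L _] := ok.
have -> : <<A>> = lperms L.
  apply/eqP; rewrite eqEsubset (gen_sub_lperms ok) /=.
  by apply/subsetP => _ /[!inE] /mapP[y /L_sub[_ Ay] ->].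
by rewrite card_lperms.
Qed.

End GeneratedGroup.

Definition a_powers : seq (seq nat) := mkseq (lpow l_a) 11.
Definition in_cycle_a (y : seq nat) : bool := has (fun p => p == y) a_powers.
Definition l_t : seq nat := [:: 4; 5; 8; 3; 0; 1; 7; 6; 2; 9; 10; 11]%N.

Lemma perm_list_a : perm_list l_a. Proof. by []. Qed.
Lemma perm_list_t : perm_list l_t. Proof. by []. Qed.

(* The entries [z] of [L] with a z = z a^i for some i; for [L] enumerating M11
   this is the normaliser of <[a]> in M11. *)
Definition norm_a (L : seq (seq nat)) : seq (seq nat) :=
  filter (fun z => has (fun p => lcomp l_a z == lcomp z p) a_powers) L.

Definition t_or_order8 (y : seq nat) : bool :=
  (y == l_t) || ((lpow y 8 == lid) && (lpow y 4 != lid)).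

Definition cert_t (z : seq nat) : bool :=
  [|| lpow z 11 != lid, in_cycle_a z |
      search [:: l_a; z] t_or_order8 12 [:: lid] (PositiveSet.add (key lid) PositiveSet.empty)].

Definition M11_certificate (L : seq (seq nat)) : bool :=
  [&& enum_ok [:: l_a; l_b] L, size L == 7920, size (norm_a L) == 55 & all cert_t L].
Definition M12_certificate (L L11 : seq (seq nat)) : bool :=
  enum_ok [:: l_a; l_b; l_c] L && (size L == 12 * size L11)%N.

Lemma M11_certificate_ok : M11_certificate (enum_closure [:: l_a; l_b]).
Proof. vm_cast_no_check (erefl true). Qed.
Lemma M12_certificate_ok :
  M12_certificate (enum_closure [:: l_a; l_b; l_c]) (enum_closure [:: l_a; l_b]).
Proof. vm_cast_no_check (erefl true). Qed.

(* The enumerations are locked: later proofs only use the facts below, and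
   unification must never try to evaluate them. *)
Definition M11_list : seq (seq nat) := locked (enum_closure [:: l_a; l_b]).
Definition M12_list : seq (seq nat) := locked (enum_closure [:: l_a; l_b; l_c]).
Definition norm_a_list : seq (seq nat) := norm_a M11_list.

Lemma M11_listE : M11_list = enum_closure [:: l_a; l_b].
Proof. by rewrite /M11_list -lock. Qed.
Lemma M12_listE : M12_list = enum_closure [:: l_a; l_b; l_c].
Proof. by rewrite /M12_list -lock. Qed.

Lemma M11_certificate_parts :
  [/\ enum_ok [:: l_a; l_b] M11_list, size M11_list = 7920,
      size norm_a_list = 55 & all cert_t M11_list].
Proof.
have := M11_certificate_ok; rewrite /M11_certificate /norm_a_list M11_listE.
by case/and4P=> ok /eqP size11 /eqP size_norm cert; exact: And4 ok size11 size_norm cert.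
Qed.

Lemma M12_certificate_parts :
  enum_ok [:: l_a; l_b; l_c] M12_list /\ size M12_list = (12 * size M11_list)%N.
Proof.
have := M12_certificate_ok; rewrite /M12_certificate M12_listE M11_listE.
by case/andP=> ok /eqP size12; exact: conj ok size12.
Qed.

Lemma gen_aE : gen_a = lperm l_a. Proof. by apply/permP => i; rewrite permE lpermE. Qed.
Lemma gen_bE : gen_b = lperm l_b. Proof. by apply/permP => i; rewrite permE lpermE. Qed.
Lemma gen_cE : gen_c = lperm l_c. Proof. by apply/permP => i; rewrite permE lpermE. Qed.

Lemma M11_enum : M11 :=: lperms M11_list /\ #|M11| = size M11_list.
Proof.
have M11_gens : [set gen_a; gen_b] =i map lperm [:: l_a; l_b].
  by move=> x; rewrite !inE gen_aE gen_bE.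
case: M11_certificate_parts => ok _ _ _; rewrite M11_listE in ok *.
exact: (enum_closureE (gens := [:: l_a; l_b]) isT M11_gens ok).
Qed.

Lemma M12_enum : #|M12| = size M12_list.
Proof.
have M12_gens : [set gen_a; gen_b; gen_c] =i map lperm [:: l_a; l_b; l_c].
  by move=> x; rewrite !inE -orbA gen_aE gen_bE gen_cE.
have [ok _] := M12_certificate_parts; rewrite M12_listE in ok *.
exact: (enum_closureE (gens := [:: l_a; l_b; l_c]) isT M12_gens ok).2.
Qed.

Lemma card_M11 : #|M11| = 7920.
Proof. by case: M11_certificate_parts => _ size11 _ _; rewrite M11_enum.2 size11. Qed.

Lemma card_M12 : #|M12| = (12 * #|M11|)%N.
Proof. by rewrite M12_enum M12_certificate_parts.2 M11_enum.2. Qed.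

Lemma mem_M11 x : x \in M11 -> exists2 z, z \in M11_list & perm_list z /\ x = lperm z.
Proof.
have [/and4P[/allP p_L _ _ _] _ _ _] := M11_certificate_parts.
rewrite M11_enum.1 inE => /mapP[z zL ->].
by exists z; [exact: zL | split; [exact: p_L | reflexivity]].
Qed.

Lemma gen_a_M11 : gen_a \in M11.
Proof. by rewrite mem_gen // !inE eqxx. Qed.

Lemma gen_a_expg11 : gen_a ^+ 11 = 1.
Proof. by rewrite gen_aE -(lperm_pow 11 perm_list_a).2 -lperm_lid. Qed.

Lemma gen_a_order : #[gen_a] = 11.
Proof.
have a_ne1 : gen_a != 1 by rewrite gen_aE -lperm_lid lperm_eq.
have /primeP[_ prime11] : prime 11 by [].
have /prime11/pred2P[/eqP|//] : #[gen_a] %| 11 by rewrite order_dvdn gen_a_expg11.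
by rewrite order_eq1 (negbTE a_ne1).
Qed.

Lemma expg_gcd (gT : finGroupType) (G : {group gT}) x m :
  x \in G -> x ^+ m = 1 -> x ^+ gcdn m #|G| = 1.
Proof.
by move=> xG xm; apply/eqP; rewrite -order_dvdn dvdn_gcd order_dvdn xm eqxx order_dvdG.
Qed.

Lemma conj_a_into_cycle_small (K : {group 'S_12}) : K \subset M11 ->
  {in K, forall k, gen_a ^ k \in <[gen_a]>} -> #|K| <= 55.
Proof.
move=> sKM Ka; have [_ _ <- _] := M11_certificate_parts.
apply: leq_trans (card_lperms_le _); apply: subset_leq_card.
apply/subsetP => k kK; have /cycleP[i ai] := Ka _ kK.
have [z zM [pz ek]] := mem_M11 (subsetP sKM k kK); subst k.
have [p_ai ai_val] := lperm_pow (i %% 11) perm_list_a.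
have aza : lcomp l_a z = lcomp z (lpow l_a (i %% 11)).
  apply: lperm_inj; rewrite ?lcomp_perm_list // !lperm_comp // ai_val -gen_aE.
  by rewrite (expg_mod _ gen_a_expg11) -ai conjgC.
rewrite inE map_f // /norm_a_list /norm_a mem_filter zM andbT; apply/hasP.
exists (lpow l_a (i %% 11)); last exact/eqP.
by apply: map_f; rewrite mem_iota ltn_mod.
Qed.

Lemma order11_outside_cycle (K : {group 'S_12}) : K \subset M11 -> gen_a \in K ->
  55 < #|K| -> exists2 x, x \in K & x ^+ 11 = 1 /\ x \notin <[gen_a]>.
Proof.
move=> sKM aK bigK.
have [/exists_inP[x xK /andP[/eqP x11 x_a]]|/exists_inPn no_x] :=
  boolP [exists x in K, (x ^+ 11 == 1) && (x \notin <[gen_a]>)]; first by exists x.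
suff: #|K| <= 55 by rewrite leqNgt bigK.
apply: conj_a_into_cycle_small sKM _ => k kK.
have := no_x _ (groupJ aK kK).
by rewrite -conjXg gen_a_expg11 conj1g eqxx negbK.
Qed.

Lemma index12_contains_t (K : {group 'S_12}) : K \subset M11 -> gen_a \in K ->
  #|K| = 660 -> lperm l_t \in K.
Proof.
move=> sKM aK cardK.
have [x xK [x11 x_a]] : exists2 x, x \in K & x ^+ 11 = 1 /\ x \notin <[gen_a]>.
  by apply: order11_outside_cycle; rewrite ?cardK.
have [z zM [pz ex]] := mem_M11 (subsetP sKM x xK).
have : cert_t z by case: M11_certificate_parts => _ _ _ /allP; apply.
rewrite /cert_t.
have -> : (lpow z 11 != lid) = false.
  by rewrite -(lperm_eq (lperm_pow 11 pz).1 perm_list_lid) (lperm_pow 11 pz).2 -ex x11 lperm_lid eqxx.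
have -> : in_cycle_a z = false.
  apply/negbTE/hasP => -[_ /mapP[j _ ->] /eqP aj]; case/negP: x_a.
  by rewrite ex -aj (lperm_pow j perm_list_a).2 -gen_aE mem_cycle.
pose inK y := perm_list y /\ lperm y \in K.
have step y g : inK y -> g \in [:: l_a; z] -> inK (lcomp y g).
  case=> py yK; rewrite !inE => /orP[] /eqP ->.
    by split; [apply: lcomp_perm_list | rewrite lperm_comp // groupM // -gen_aE].
  by split; [apply: lcomp_perm_list | rewrite lperm_comp // groupM // -ex].
have start y : y \in [:: lid] -> inK y.
  by rewrite inE => /eqP ->; split; [exact: perm_list_lid | rewrite lperm_lid group1].
case/(search_sound step start) => y [[py yK] /orP[/eqP <- // | /andP[/eqP y8 y4]]].
have y8' : lperm y ^+ 8 = 1 by rewrite -(lperm_pow 8 py).2 y8 lperm_lid.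
have gcd_8_K : gcdn 8 #|K| = 4 by rewrite cardK.
have y4' := expg_gcd yK y8'; rewrite gcd_8_K in y4'.
case/negP: y4; rewrite -(lperm_eq (lperm_pow 4 py).1 perm_list_lid) (lperm_pow 4 py).2.
by rewrite lperm_lid y4'.
Qed.

Lemma t_involution : lperm l_t ^+ 2 = 1.
Proof. by rewrite -(lperm_pow 2 perm_list_t).2 -lperm_lid. Qed.

Lemma t_neq1 : lperm l_t != 1.
Proof. by rewrite -lperm_lid lperm_eq ?perm_list_t ?perm_list_lid. Qed.

Lemma order11_Sylow x : x \in M11 -> #[x] = 11 -> 11.-Sylow(M11) <[x]>.
Proof.
move=> xM ox; rewrite pHallE cycle_subG xM /= card_M11 p_part.
by rewrite (_ : 11 ^ logn 11 7920 = 11)%N //; apply/eqP; exact: ox.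
Qed.

(* M11 has no two subgroups of order 660 meeting in a subgroup of order 55:
   after conjugation both contain [a], hence [t], which cannot lie in a group
   of odd order 55. *)
Lemma M11_no_660_pair (H K : {group 'S_12}) : H \subset M11 -> K \subset M11 ->
  #|H| = 660 -> #|K| = 660 -> #|H :&: K| != 55.
Proof.
move=> sHM sKM cardH cardK; apply/negP => /eqP cardHK.
have dvd11 : 11 %| #|[group of H :&: K]| by rewrite /= cardHK.
have [y HKy oy] := Cauchy (isT : prime 11) dvd11.
have yM : y \in M11 by case/setIP: HKy => /(subsetP sHM).
have [g gM conj_a] :=
  Sylow_trans (order11_Sylow gen_a_M11 gen_a_order) (order11_Sylow yM oy).
have ya : <[y]> = <[gen_a]> :^ g by move: (congr1 val conj_a).
have aHK : gen_a ^ g \in H :&: K.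
  have sYHK : <[y]> \subset H :&: K by rewrite cycle_subG.
  by apply: (subsetP sYHK); rewrite ya memJ_conjg cycle_id.
have t_conj (L : {group 'S_12}) :
    L \subset M11 -> #|L| = 660 -> gen_a ^ g \in L -> lperm l_t \in L :^ g^-1.
  move=> sLM cardL aL; apply: (@index12_contains_t (L :^ g^-1)%G).
  - by rewrite /= sub_conjg invgK (conjGid gM).
  - by rewrite /= mem_conjg invgK.
  - by rewrite /= cardJg.
have tHK : lperm l_t \in (H :&: K) :^ g^-1.
  by case/setIP: aHK => aH aK; rewrite conjIg inE !t_conj.
have gcd_2_HK : gcdn 2 #|(H :&: K) :^ g^-1| = 1%N by rewrite cardJg cardHK.
have := expg_gcd tHK t_involution; rewrite gcd_2_HK expg1 => t1.
by move: t_neq1; rewrite t1 eqxx.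
Qed.

Lemma isog_M11_no_660_pair (gT : finGroupType) (B H K : {group gT}) :
  B \isog M11 -> H \subset B -> K \subset B ->
  #|H| = 660 -> #|K| = 660 -> #|H :&: K| != 55.
Proof.
case/isogP=> f injf imf sHB sKB cardH cardK.
have sHKB : H :&: K \subset B by rewrite subIset ?sHB.
rewrite -(card_injm injf sHKB) injmI //.
by apply: M11_no_660_pair; rewrite -?imf ?morphimS ?card_injm.
Qed.

Lemma card_cap_M12_factor (G H : {group 'S_12}) k :
  G * H = M12 -> #|H| = #|M11| -> #|G| = (k * 12)%N -> #|G :&: H| = k.
Proof.
move=> GH cardH cardG; apply/eqP.
rewrite -(eqn_pmul2r (isT : 0 < 12)) -cardG -(eqn_pmul2r (cardG_gt0 M11)) -cardH.
by rewrite mul_cardG GH card_M12 cardH; apply/eqP; lia.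
Qed.

Section Factorisation.

Variables (A1 A2 A4 : {group 'S_12}) (psi : {morphism A2 >-> 'S_12}).
Hypotheses (sA1 : A1 \subset M12) (sA2 : A2 \subset M12) (sA4 : A4 \subset M12).
Hypothesis s_psi : psi @* A2 \subset M12.

Let S := setX (setX M12 M12) (setX M12 M12).
Let X := [set ((p, p), (q, q)) | p in M12, q in M12].
Let Y := [set ((a.1.1, a.1.2), (psi a.1.2, a.2)) | a in setX (setX A1 A2) A4].

Hypothesis S_XY : S = X * Y.

Lemma XY_decomposition u : u \in S -> exists p q a1 a2 a4,
  [/\ a1 \in A1, a2 \in A2, a4 \in A4 & u = ((p * a1, p * a2), (q * psi a2, q * a4))].
Proof.
rewrite S_XY => /mulsgP[_ _ /imset2P[p q _ _ ->] /imsetP[[[a1 a2] a4] Aa ->] ->].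
by case/setXP: Aa => /setXP[A1a1 A2a2] A4a4; exists p, q, a1, a2, a4.
Qed.

(* Decomposing (1, g, 1, 1) gives g = a1^-1 a2. *)
Lemma XY_first_factor : A1 * A2 = M12.
Proof.
apply/eqP; rewrite eqEsubset mul_subG //; apply/subsetP => g gM.
have : ((1, g), (1, 1)) \in S by rewrite !inE gM group1.
case/XY_decomposition=> p [q [a1 [a2 [a4 [A1a1 A2a2 _ [pa1 pa2 _ _]]]]]].
have pV : p = a1^-1 by rewrite -(mulgK a1 p) -pa1 mul1g.
by rewrite pa2 pV mem_mulg ?groupV.
Qed.

(* Decomposing (1, 1, 1, g) forces a1 = a2 =: d and g = (d psi)^-1 a4. *)
Lemma XY_second_factor : psi @* (A1 :&: A2) * A4 = M12.
Proof.
have sD : psi @* (A1 :&: A2) \subset M12.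
  by apply: subset_trans s_psi; rewrite morphimS ?subsetIr.
apply/eqP; rewrite eqEsubset mul_subG //; apply/subsetP => g gM.
have : ((1, 1), (1, g)) \in S by rewrite !inE gM group1.
case/XY_decomposition=> p [q [a1 [a2 [a4 [A1a1 A2a2 A4a4 [pa1 pa2 qa2 qa4]]]]]].
have a12 : a1 = a2 by apply: (@mulgI _ p); rewrite -pa1 -pa2.
have qV : q = psi a2^-1 by rewrite morphV // -(mulgK (psi a2) q) -qa2 mul1g.
rewrite qa4 qV mem_mulg // mem_morphim ?groupV //.
by rewrite inE -{1}a12 A1a1 A2a2.
Qed.

End Factorisation.

Theorem lemma2p5 (A1 A2 A3 A4 : {group 'S_12})
    (sA1 : A1 \subset M12) (sA2 : A2 \subset M12)
    (sA3 : A3 \subset M12) (sA4 : A4 \subset M12)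
    (iA1 : A1 \isog M11) (iA2 : A2 \isog M11)
    (iA3 : A3 \isog M11) (iA4 : A4 \isog M11)
    (psi : {morphism A2 >-> 'S_12}) (ipsi : isom A2 A3 psi) :
  let S := setX (setX M12 M12) (setX M12 M12) in
  let X := [set ((p, p), (q, q)) | p in M12, q in M12] in
  let Y := [set ((a.1.1, a.1.2), (psi a.1.2, a.2)) | a in setX (setX A1 A2) A4] in
  S != X * Y.
Proof.
cbv zeta; apply/negP => /eqP S_XY.
have psiA2 : psi @* A2 = A3 := isom_im ipsi.
pose H := (psi @* (A1 :&: A2))%G.
have sHA3 : H \subset A3 by rewrite -psiA2 morphimS ?subsetIr.
have A1A2 := XY_first_factor sA1 sA2 S_XY.
have s_psi : psi @* A2 \subset M12 by rewrite psiA2.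
have HA4 := XY_second_factor sA4 s_psi S_XY.
have A3A4 : A3 * A4 = M12.
  by apply/eqP; rewrite eqEsubset mul_subG //= -{1}HA4 mulSg.
have card11 (B : {group 'S_12}) : B \isog M11 -> #|B| = #|M11| by move/card_isog.
have cardM11 : #|M11| = (660 * 12)%N by rewrite card_M11.
have cardD : #|A1 :&: A2| = 660.
  by apply: (card_cap_M12_factor A1A2 (card11 _ iA2)); rewrite (card11 _ iA1) cardM11.
have cardK : #|A3 :&: A4| = 660.
  by apply: (card_cap_M12_factor A3A4 (card11 _ iA4)); rewrite (card11 _ iA3) cardM11.
have cardH : #|H| = 660 by rewrite card_injm ?(isom_inj ipsi) ?subsetIr ?cardD.
have cardHK : #|H :&: (A3 :&: A4)| = 55.
  rewrite setIA (setIidPl sHA3).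
  by apply: (card_cap_M12_factor HA4 (card11 _ iA4)); rewrite cardH.
by move: (isog_M11_no_660_pair iA3 sHA3 (subsetIl A3 A4) cardH cardK); rewrite cardHK.
Qed.
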